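(* Let $\mathcal{F}$ be the class of planar graphs of maximum degree at most $4$, and let $G \in \mathcal{F}$ be a graph with $\chi_2(G) > 12$ that minimizes the pair $(|V(G)|, |E(G)|)$ (lexicographically) among all graphs of $\mathcal{F}$ with $\chi_2 > 12$, with a fixed planar embedding. Then $G$ does not contain a $3$-vertex incident to two $4$-faces.
   Context: All graphs are finite, without loops or parallel edges. A distance-$2$ coloring of a graph is an assignment of colors to its vertices such that any two distinct vertices at distance at most $2$ receive different colors; $\chi_2(G)$ is the minimum number of colors in a distance-$2$ coloring of $G$. A $d$-vertex is a vertex of degree $d$. The degree of a face is the number of edges incident to it, counted with multiplicity; a $d$-face is a face of degree $d$. A vertex is incident to a face if it lies on its boundary. *)

(* Simple graphs are symmetric irreflexive relations on a finType. *)
From mathcomp Require Import all_boot all_fingroup.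
Set Implicit Arguments. Unset Strict Implicit. Unset Printing Implicit Defensive.

Section Graphs.
Variables (T : finType) (e : rel T).

Definition simple_graph : Prop := symmetric e /\ irreflexive e.

Definition deg (v : T) : nat := #|[set w | e v w]|.

(* darts (= oriented edges); their number is twice the number of edges *)
Definition dart (d : T * T) : bool := e d.1 d.2.
Definition nedges : nat := #|[set d | dart d]|./2.

(* distance at most 2 (for distinct vertices) *)
Definition dist_le2 (u v : T) : bool := e u v || [exists w, e u w && e w v].

Definition d2colorable (k : nat) : bool :=
  [exists c : {ffun T -> 'I_k},
     [forall u, forall v, ((u != v) && dist_le2 u v) ==> (c u != c v)]].

Lemma d2colorable_ex : exists k, d2colorable k.
Proof.
exists #|T|; apply/existsP; exists [ffun x => enum_rank x].
apply/forallP => u; apply/forallP => v; apply/implyP => /andP[uv _].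
by rewrite !ffunE; apply: contra uv => /eqP/enum_rank_inj ->.
Qed.

Definition chi2 : nat := ex_minn d2colorable_ex.

Definition ncomp : nat := #|[set [set w | connect e v w] | v : T]|.
Definition niso : nat := #|[set v | [forall w, ~~ e v w]]|.

(* Combinatorial embedding (rotation system): rho is a permutation of the
   darts (fixing non-darts) which, at every vertex v, cyclically permutes
   the darts with tail v in a single cycle. *)
Definition rotation_system (rho : {perm T * T}) : Prop :=
  [/\ forall d, ~~ dart d -> rho d = d,
      forall d, dart d -> (rho d).1 = d.1
    & forall d d', dart d -> dart d' -> d.1 = d'.1 -> fconnect rho d d'].

Definition face_step (rho : {perm T * T}) (d : T * T) : T * T :=
  if dart d then rho (d.2, d.1) else d.

(* faces = orbits of face_step on darts, represented as sets of darts;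
   the degree of a face f is #|f| (edges counted with multiplicity) *)
Definition faces (rho : {perm T * T}) : {set {set T * T}} :=
  [set [set d' | fconnect (face_step rho) d d'] | d in [set d | dart d]].

Definition incident (v : T) (f : {set T * T}) : bool := [exists d in f, d.1 == v].

(* planar (genus 0) embedding: Euler's formula V - E + F = 2 for every
   component with an edge, i.e. V + F + (#isolated) = 2 #components + E *)
Definition plane_embedding (rho : {perm T * T}) : Prop :=
  rotation_system rho /\
  #|T| + #|faces rho| + niso = 2 * ncomp + nedges.

Definition planar : Prop := exists rho, plane_embedding rho.

Definition in_F : Prop := simple_graph /\ planar /\ forall v, deg v <= 4.

End Graphs.

Definition lexle (p q : nat * nat) : Prop :=
  (p.1 < q.1)%N \/ (p.1 = q.1 /\ (p.2 <= q.2)%N).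

(* Let v be a 3-vertex on two 4-faces. Around a vertex of degree 3 two distinct
   faces share an edge vp, so the faces are quadrangles v p x s and v q y p,
   where s, p, q are the neighbours of v. Deleting vp merges them into the
   hexagon s v q y p x; Euler's formula is preserved, so the smaller graph is
   still in F and, by minimality, has a distance-2 colouring with 12 colours.
   This colouring remains valid in G away from v, because x and y take over
   the role of v in connecting p to s and q. Finally v has at most
   3 + 2 + 3 + 3 = 11 other vertices within distance 2, so a colour is left
   for v, contradicting chi_2(G) > 12. *)

From mathcomp Require Import all_boot all_fingroup.
Set Implicit Arguments. Unset Strict Implicit. Unset Printing Implicit Defensive.

Section Orbits.
Variable X : finType.
Implicit Types (f g : X -> X) (r : {perm X}).

Lemma fconnect_stable f (a : {pred X}) x y : injective f ->
  {homo f : z / z \in a} -> fconnect f x y -> x \in a -> y \in a.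
Proof.
move=> injf fa xy ax; have fsym := fconnect_sym injf.
rewrite -(closed_connect (intro_closed fsym _) xy) // => z _ /eqP <-; apply: fa.
Qed.

Lemma fconnect_eq_on f g (a : pred X) x : {homo f : z / a z} ->
  {in a, f =1 g} -> a x -> fconnect f x =1 fconnect g x.
Proof.
move=> fa fg ax.
have iterE n : iter n f x = iter n g x /\ a (iter n f x).
  elim: n => [|n [IHe IHa]] //=; rewrite -IHe; split; [exact: fg | exact: fa].
move=> y; apply/idP/idP => /iter_findex <-.
  by rewrite (iterE _).1 fconnect_iter.
by rewrite -(iterE _).1 fconnect_iter.
Qed.

(* [splice r z] sends the predecessor [r^-1 z] of [z] straight to [r z] and
   fixes [z]: it removes [z] from its cycle and leaves the other cycles alone. *)
Definition splice r z : {perm X} := (tperm (r^-1%g z) z * r)%g.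

Lemma spliceE r z d : splice r z d = r (tperm (r^-1%g z) z d).
Proof. by rewrite permM. Qed.

Lemma splice_id r z : splice r z z = z.
Proof. by rewrite spliceE tpermR permKV. Qed.

Lemma splice_pred r z : splice r z (r^-1%g z) = r z.
Proof. by rewrite spliceE tpermL. Qed.

Lemma splice_other r z d : d != r^-1%g z -> d != z -> splice r z d = r d.
Proof. by move=> d1 d2; rewrite spliceE tpermD // eq_sym. Qed.

Lemma splice_fix r z d : r d = d -> d != z -> splice r z d = d.
Proof.
move=> rd dz; rewrite splice_other //.
by apply: contra_neq dz => dE; rewrite -[LHS]rd dE permKV.
Qed.

Lemma splice_invE r z z' : z' != z -> z' != r z -> (splice r z)^-1%g z' = r^-1%g z'.
Proof.
move=> z'z z'rz; apply: (@perm_inj _ (splice r z)); rewrite permKV splice_other ?permKV //.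
  by rewrite (inj_eq (@perm_inj _ _)).
by apply: contra_neq z'rz => <-; rewrite permKV.
Qed.

Lemma splice_invariant (Y : Type) (k : X -> Y) r z :
  (forall d, k (r d) = k d) -> forall d, k (splice r z d) = k d.
Proof.
move=> kr d; rewrite spliceE; case: tpermP => [-> | -> |] //.
  by rewrite kr -{1}(permKV r z) kr.
by rewrite -[in RHS](permKV r z) kr.
Qed.

Lemma fconnect_splice r z x y : x != z -> y != z ->
  fconnect r x y -> fconnect (splice r z) x y.
Proof.
move=> xz yz xy; pose a := [pred b | fconnect (splice r z) x (if b == z then r^-1%g z else b)].
suff: y \in a by rewrite inE (negbTE yz).
apply: fconnect_stable (@perm_inj _ r) _ xy _; last by rewrite inE (negbTE xz) connect0.
move=> b; rewrite !inE.
have [-> | bz] := eqVneq b z.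
  have [// | rzz] := eqVneq (r z) z.
  by move=> /connect_trans; apply; rewrite -(splice_pred r z) fconnect1.
have [rbz | rbz] := eqVneq (r b) z; first by rewrite -rbz permK.
move=> /connect_trans; apply; rewrite -(@splice_other r z b) ?fconnect1 //.
by apply: contra_neq rbz => ->; rewrite permKV.
Qed.

End Orbits.

Lemma size_uniq_nbrs (T : finType) (e : rel T) v (s : seq T) :
  uniq s -> all (e v) s -> size s <= deg e v.
Proof.
move=> /card_uniqP <- /allP nbrs; apply: subset_leq_card.
by apply/subsetP => w /nbrs; rewrite inE.
Qed.

Section Colouring.
Variable T : finType.
Implicit Types (e : rel T) (k : nat).

Lemma chi2_min e k : d2colorable e k -> chi2 e <= k.
Proof. by rewrite /chi2; case: ex_minnP => m _; apply. Qed.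

Lemma d2colorable_chi2 e : d2colorable e (chi2 e).
Proof. by rewrite /chi2; case: ex_minnP. Qed.

Lemma d2colorable_leq e k k' : k <= k' -> d2colorable e k -> d2colorable e k'.
Proof.
move=> kk' /existsP[c /forallP c_ok]; apply/existsP.
exists [ffun x => widen_ord kk' (c x)]; apply/forallP => u; apply/forallP => w.
apply/implyP => uw; rewrite !ffunE; apply: contra (implyP (forallP (c_ok u) w) uw).
by move/eqP/(congr1 val) => cuw; apply/eqP/val_inj.
Qed.

Lemma dist_le2_sym e : symmetric e -> symmetric (dist_le2 e).
Proof.
move=> sym u w; rewrite /dist_le2 sym; congr (_ || _).
by apply/existsP/existsP => -[m /andP[um mw]]; exists m; rewrite sym mw sym um.
Qed.

Lemma d2colorable_extend e e' k v : symmetric e ->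
  (forall u w, u != v -> w != v -> u != w -> dist_le2 e u w -> dist_le2 e' u w) ->
  #|[set w | (w != v) && dist_le2 e v w]| < k -> d2colorable e' k -> d2colorable e k.
Proof.
move=> sym dist_e' ball_k /existsP[c /forallP c_ok].
set S := [set w | _ && _] in ball_k.
have [k0 k0S] : exists k0 : 'I_k, k0 \notin c @: S.
  apply/existsP; apply: contraLR ball_k; rewrite negb_exists -leqNgt => /forallP inS.
  rewrite -[k]card_ord (leq_trans _ (leq_imset_card c S)) // subset_leq_card //.
  by apply/subsetP => i _; have := inS i; rewrite negbK.
have cS w : w != v -> dist_le2 e v w -> k0 != c w.
  move=> wv vw; apply: contraNneq k0S => ->; apply: imset_f.
  by rewrite inE wv.
apply/existsP; exists [ffun w => if w == v then k0 else c w].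
apply/forallP => u; apply/forallP => w; apply/implyP => /andP[uw uw2]; rewrite !ffunE.
have [uv | uv] := eqVneq u v; have [wv | wv] := eqVneq w v.
- by rewrite uv wv eqxx in uw.
- by apply: cS; rewrite // -uv.
- by rewrite eq_sym; apply: cS; rewrite // dist_le2_sym // -wv.
- by apply: (implyP (forallP (c_ok u) w)); rewrite uw dist_e'.
Qed.

End Colouring.

Definition face_of (T : finType) (e : rel T) (rho : {perm T * T}) (d : T * T) :
  {set T * T} := [set d' | fconnect (face_step e rho) d d'].

Section RotationSystem.
Variables (T : finType) (e : rel T) (rho : {perm T * T}).
Hypotheses (sym : symmetric e) (rot : rotation_system e rho).
Implicit Types (d : T * T) (u v w p q : T).
Local Notation fs := (face_step e rho).

Lemma rho_nondart d : ~~ dart e d -> rho d = d.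
Proof. by case: rot => fix_rho _ _; apply: fix_rho. Qed.

Lemma rho_tail d : (rho d).1 = d.1.
Proof.
by case: rot => _ tail_rho _; have [/tail_rho | /rho_nondart ->] := boolP (dart e d).
Qed.

Lemma rho_inv_tail d : (rho^-1%g d).1 = d.1.
Proof. by rewrite -[in RHS](permKV rho d) rho_tail. Qed.

Lemma rho_dart d : dart e (rho d) = dart e d.
Proof.
have [dd | nd] := boolP (dart e d); last by rewrite rho_nondart // (negbTE nd).
by apply: contraTT dd => nd; rewrite -(perm_inj (rho_nondart nd)).
Qed.

Lemma dart_rev u w : dart e (w, u) = dart e (u, w).
Proof. exact: sym. Qed.

Lemma face_stepE u w : dart e (u, w) -> fs (u, w) = rho (w, u).
Proof. by rewrite /face_step => ->. Qed.

Lemma face_step_dart d : dart e (fs d) = dart e d.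
Proof. by case: d => u w; rewrite /face_step; case: ifP => // dd; rewrite rho_dart dart_rev. Qed.

Lemma face_step_tail d : dart e d -> (fs d).1 = d.2.
Proof. by case: d => u w dd; rewrite face_stepE // rho_tail. Qed.

Lemma face_step_inj : injective fs.
Proof.
move=> d d' fsE; have := congr1 (dart e) fsE; rewrite !face_step_dart => dE.
move: fsE; rewrite /face_step -dE; case: ifP => // _.
by case: d d' {dE} => a b [a' b'] /perm_inj [-> ->].
Qed.

Lemma face_of_dart d d' : d' \in face_of e rho d -> dart e d' = dart e d.
Proof.
rewrite inE => /(fconnect_invariant (k := dart e)) -> // z.
by rewrite /= face_step_dart eqxx.
Qed.

Lemma face_ofE d d' : d' \in face_of e rho d -> face_of e rho d' = face_of e rho d.
Proof.
rewrite inE => dd'; apply/setP => z; rewrite !inE.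
by rewrite (same_connect (fconnect_sym face_step_inj) dd').
Qed.

Lemma mem_face_of_step d z : (fs z \in face_of e rho d) = (z \in face_of e rho d).
Proof. by rewrite !inE -same_fconnect1_r //; apply: face_step_inj. Qed.

Lemma deg_le2_of_2cycle v p q : dart e (v, p) ->
  rho (v, p) = (v, q) -> rho (v, q) = (v, p) -> deg e v <= 2.
Proof.
move=> vp rp rq; pose a := [pred d | (d == (v, p)) || (d == (v, q))].
have rho_a : {homo rho : d / d \in a}.
  by move=> d; rewrite !inE => /orP[] /eqP ->; rewrite ?rp ?rq eqxx ?orbT.
apply: leq_trans (_ : #|[set p; q]| <= 2); last by rewrite cards2; case: (p != q).
apply/subset_leq_card/subsetP => w; rewrite !inE => vw.
have: (v, w) \in a.
  apply: (fconnect_stable (x := (v, p)) (@perm_inj _ rho) rho_a); last by rewrite !inE eqxx.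
  by case: rot => _ _; apply.
by rewrite !inE !xpair_eqE eqxx.
Qed.

(* The face traced from the dart [(v, p)] is the quadrangle [v p x s]. *)
Definition quad_at v p x s : Prop :=
  [/\ dart e (v, p), rho (v, s) = (v, p), rho (p, v) = (p, x),
      rho (x, p) = (x, s) & rho (s, x) = (s, v)].

Lemma quad_edges v p x s : quad_at v p x s -> [/\ e v p, e p x, e x s & e s v].
Proof.
case=> vp _ rp rx rs.
have px : e p x by rewrite -[e p x]/(dart e (p, x)) -rp rho_dart // dart_rev.
have xs : e x s by rewrite -[e x s]/(dart e (x, s)) -rx rho_dart // dart_rev.
by split=> //; rewrite -[e s v]/(dart e (s, v)) -rs rho_dart // dart_rev.
Qed.

Lemma quad_face_cycle v p x s : quad_at v p x s ->
  fcycle fs [:: (v, p); (p, x); (x, s); (s, v)].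
Proof.
move=> quad; have [vp px xs sv] := quad_edges quad; case: quad => _ rv rp rx rs.
by rewrite /= !face_stepE //= rv rp rx rs !eqxx.
Qed.

Lemma mem_quad_face v p x s : quad_at v p x s ->
  face_of e rho (v, p) =i [:: (v, p); (p, x); (x, s); (s, v)].
Proof. by move=> /quad_face_cycle cyc d; rewrite inE (fconnect_cycle cyc) ?mem_head. Qed.

Lemma quad_of_face4 v F : F \in faces e rho -> #|F| = 4 -> incident v F ->
  exists p x s, quad_at v p x s /\ F = face_of e rho (v, p).
Proof.
move=> /imsetP[d0 /[!inE] d0_dart ->]; rewrite -/(face_of e rho d0) => F4.
case/existsP=> -[v' p] /andP[d0d /eqP /= v'v]; subst v'.
rewrite -(face_ofE d0d) in F4 *; exists p.
have vp : dart e (v, p) by rewrite (face_of_dart d0d).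
have fs_next d : dart e d -> exists w, fs d = (d.2, w) /\ dart e (d.2, w).
  move=> dd; exists (fs d).2; rewrite -(face_step_tail dd) -surjective_pairing.
  by rewrite face_step_dart.
have [x [r1 px]] := fs_next _ vp; have [s [r2 xs]] := fs_next _ px.
have [t [r3 st]] := fs_next _ xs.
have r4 : fs (s, t) = (v, p).
  have order4 : fingraph.order fs (v, p) = 4.
    by rewrite -F4; apply: eq_card => d; rewrite /face_of !inE.
  by have := iter_order face_step_inj (v, p); rewrite order4 /= r1 r2 r3.
have tv : t = v by have := face_step_tail st; rewrite r4 => /= ->.
subst t; exists x, s; split=> //.
by split; rewrite // -face_stepE.
Qed.

Lemma quad_neq v p x s : 2 < deg e v -> quad_at v p x s -> x != v /\ s != p.
Proof.
move=> deg_v [vp rv _ rx _]; split; apply: contraTneq deg_v => eq; rewrite -leqNgt.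
  by rewrite eq in rx; apply: (deg_le2_of_2cycle vp rx rv).
by rewrite eq in rv; apply: (deg_le2_of_2cycle vp rv rv).
Qed.

(* Two quadrangles at a 3-vertex share one of its edges. *)
Lemma adjacent_quads v p1 x1 s1 p2 x2 s2 : deg e v = 3 ->
  quad_at v p1 x1 s1 -> quad_at v p2 x2 s2 -> p1 != p2 -> s2 = p1 \/ s1 = p2.
Proof.
move=> deg_v quad1 quad2 p12; have deg_gt2 : 2 < deg e v by rewrite deg_v.
have [[_ s1p1] [_ s2p2]] := (quad_neq deg_gt2 quad1, quad_neq deg_gt2 quad2).
have [[vp1 _ _ s1v] [vp2 _ _ s2v]] := (quad_edges quad1, quad_edges quad2).
have s12 : s1 != s2.
  apply: contra_neq p12 => s12; case: quad1 quad2 => _ r1 _ _ _ [_ r2 _ _ _].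
  by move: r2; rewrite -s12 r1 => -[].
have [| s2p1] := eqVneq s2 p1; first by left.
have [| s1p2] := eqVneq s1 p2; first by right.
have := @size_uniq_nbrs _ e v [:: p1; p2; s1; s2]; rewrite deg_v /= !inE !negb_or.
rewrite p12 s12 !(eq_sym p1) !(eq_sym p2) s1p1 s2p1 s1p2 s2p2 vp1 vp2 !(sym v) s1v s2v.
by move/(_ isT isT).
Qed.

End RotationSystem.

Section EdgeDeletion.
Variables (T : finType) (e : rel T) (u w : T).
Hypothesis sym : symmetric e.

Definition del_edge : rel T :=
  [rel a b | [&& e a b, (a, b) != (u, w) & (a, b) != (w, u)]].

Local Notation e' := del_edge.

Lemma del_edgeE a b : e' a b = [&& e a b, (a, b) != (u, w) & (a, b) != (w, u)].
Proof. by []. Qed.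

Lemma dart_del_edge d : dart e' d = [&& dart e d, d != (u, w) & d != (w, u)].
Proof. by case: d. Qed.

Lemma del_edge_sub : subrel e' e.
Proof. by move=> a b /and3P[]. Qed.

Lemma del_edge_sym : symmetric e'.
Proof.
move=> a b; rewrite !del_edgeE sym !xpair_eqE.
by case: (a == u); case: (a == w); case: (b == u); case: (b == w); rewrite ?andbF ?andbT.
Qed.

Lemma del_edge_irr : irreflexive e -> irreflexive e'.
Proof. by move=> irr a; rewrite del_edgeE irr. Qed.

Lemma deg_del_edge a : deg e' a <= deg e a.
Proof. by apply/subset_leq_card/subsetP => b; rewrite !inE => /del_edge_sub. Qed.

Lemma nedges_del_edge : e u w -> u != w -> nedges e = (nedges e').+1.
Proof.
move=> uw u_w; have wu_uw : (w, u) != (u, w) by rewrite xpair_eqE negb_and eq_sym u_w.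
have darts' : [set d | dart e' d] = [set d | dart e d] :\ (u, w) :\ (w, u).
  apply/setP => d; rewrite !inE dart_del_edge.
  by case: (dart e d); case: (d == (u, w)); case: (d == (w, u)).
rewrite /nedges darts' [in LHS](cardsD1 (u, w)) [in LHS](cardsD1 (w, u)) !inE.
by rewrite wu_uw /dart /= uw sym uw.
Qed.

Lemma connect_del_edge : connect e' u w -> connect e' =2 connect e.
Proof.
move=> uw' a b; apply/idP/idP; apply: connect_sub => c d.
  by move/del_edge_sub/connect1.
move=> cd; have [cdE | ] := eqVneq (c, d) (u, w); first by case: cdE => -> ->.
have [[-> ->] _ | cd_wu cd_uw] := eqVneq (c, d) (w, u).
  by rewrite (sym_connect_sym del_edge_sym).
by apply: connect1; rewrite del_edgeE cd cd_uw cd_wu.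
Qed.

Lemma ncomp_del_edge : connect e' u w -> ncomp e' = ncomp e.
Proof.
move=> uw'; rewrite /ncomp (@eq_imset _ _ _ (fun a => [set b | connect e a b])) // => a.
by apply/setP => b; rewrite !inE connect_del_edge.
Qed.

Lemma niso_del_edge a b : e' u a -> e' w b -> niso e' = niso e.
Proof.
move=> ua wb; apply: eq_card => c; rewrite !inE.
apply/forallP/forallP => iso_c d; last by apply: contra (iso_c d) => /del_edge_sub.
apply/negP => cd.
have [cu | c_u] := eqVneq c u; first by have := iso_c a; rewrite cu ua.
have [cw | c_w] := eqVneq c w; first by have := iso_c b; rewrite cw wb.
by have := iso_c d; rewrite del_edgeE cd !xpair_eqE (negbTE c_u) (negbTE c_w).
Qed.

End EdgeDeletion.

Section DeleteRotation.
Variables (T : finType) (e : rel T) (rho : {perm T * T}) (u w : T).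
Hypotheses (sym : symmetric e) (rot : rotation_system e rho).
Hypotheses (uw_edge : e u w) (u_neq_w : u != w).
Local Notation e' := (del_edge e u w).

(* Remove [(u, w)] and [(w, u)] from the rotations at [u] and [w]. *)
Definition del_rot : {perm T * T} := splice (splice rho (u, w)) (w, u).

Let wu_uw : (w, u) != (u, w).
Proof. by rewrite xpair_eqE negb_and eq_sym u_neq_w. Qed.

Let tail_neq (d d' : T * T) : d.1 != d'.1 -> d != d'.
Proof. by apply: contra_neq => ->. Qed.

Let pred_uw_wu : rho^-1%g (u, w) != (w, u).
Proof. by apply: tail_neq; rewrite (rho_inv_tail rot). Qed.

Let pred_wu_uw : rho^-1%g (w, u) != (u, w).
Proof. by apply: tail_neq; rewrite (rho_inv_tail rot) // eq_sym. Qed.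

Let pred_wu_pred_uw : rho^-1%g (w, u) != rho^-1%g (u, w).
Proof. by rewrite (inj_eq (@perm_inj _ _)). Qed.

Let splice_inv_wu : (splice rho (u, w))^-1%g (w, u) = rho^-1%g (w, u).
Proof.
by rewrite splice_invE //; apply: tail_neq; rewrite (rho_tail rot) // eq_sym.
Qed.

Lemma del_rotE d : d \notin [:: (u, w); (w, u); rho^-1%g (u, w); rho^-1%g (w, u)] ->
  del_rot d = rho d.
Proof.
rewrite !inE !negb_or => /and4P[d_uw d_wu d_puw d_pwu].
by rewrite /del_rot splice_other ?splice_inv_wu // splice_other.
Qed.

Lemma del_rot_pred_uw : del_rot (rho^-1%g (u, w)) = rho (u, w).
Proof.
by rewrite /del_rot splice_other ?splice_pred ?splice_inv_wu // eq_sym.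
Qed.

Lemma del_rot_pred_wu : del_rot (rho^-1%g (w, u)) = rho (w, u).
Proof. by rewrite /del_rot -splice_inv_wu splice_pred splice_other // eq_sym. Qed.

Lemma rotation_system_del_edge : rotation_system e' del_rot.
Proof.
have uw_dart : dart e (u, w) by [].
split.
- move=> d; rewrite dart_del_edge.
  have [-> _ | d_uw] := eqVneq d (u, w).
    by rewrite /del_rot splice_other ?splice_id ?splice_inv_wu // eq_sym.
  have [-> _ | d_wu] := eqVneq d (w, u); first exact: splice_id.
  rewrite andbT => nd; rewrite /del_rot !splice_fix // (rho_nondart rot) //.
- by move=> d _; apply: splice_invariant; apply: splice_invariant; exact: rho_tail rot.
- move=> d d'; rewrite !dart_del_edge => /and3P[dd d_uw d_wu] /and3P[dd' d'_uw d'_wu] dd'1.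
  apply: fconnect_splice => //; apply: fconnect_splice => //.
  by case: rot => _ _; apply.
Qed.

Local Notation fs := (face_step e rho).
Local Notation fs' := (face_step e' del_rot).
Local Notation A := (face_of e rho (u, w)).
Local Notation B := (face_of e rho (w, u)).

Lemma face_step_del_edge z : dart e' z -> z \notin A -> z \notin B -> fs' z = fs z.
Proof.
case: z => a b; rewrite dart_del_edge => /and3P[ab ab_uw ab_wu] abA abB.
have fsE : fs (a, b) = rho (b, a) := face_stepE rho ab.
rewrite face_stepE ?dart_del_edge ?ab ?ab_uw ?ab_wu // fsE del_rotE //.
rewrite !inE !negb_or -!(can2_eq (permK rho) (permKV rho)) -fsE.
apply/and4P; split.
- by apply: contra_neq ab_wu => -[-> ->].
- by apply: contra_neq ab_uw => -[-> ->].
- by apply: contraNneq abA => fsab; rewrite -(mem_face_of_step sym rot) fsab inE connect0.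
- by apply: contraNneq abB => fsab; rewrite -(mem_face_of_step sym rot) fsab inE connect0.
Qed.

Lemma face_of_del_edge d : dart e' d -> d \notin A -> d \notin B ->
  face_of e' del_rot d = face_of e rho d.
Proof.
move=> dd dA dB; apply/setP => z; rewrite !inE; symmetry.
pose a := [pred z | [&& dart e' z, z \notin A & z \notin B]].
apply: (fconnect_eq_on (a := a)); last by rewrite /= dd dA dB.
  move=> c /and3P[cd cA cB]; rewrite /= !(mem_face_of_step sym rot) cA cB.
  move: cd; rewrite !dart_del_edge (face_step_dart sym rot) => /and3P[-> _ _] /=; rewrite andbT.
  by apply/andP; split; [apply: contraNneq cA | apply: contraNneq cB];
    rewrite -(mem_face_of_step sym rot) => ->; rewrite inE connect0.
by move=> c /and3P[cd cA cB]; rewrite face_step_del_edge.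
Qed.

Section MergedFace.
Variables (m : seq (T * T)) (d0 : T * T).
Hypotheses (AB : A != B) (cyc_m : fcycle fs' m) (d0m : d0 \in m).
Hypothesis mE : forall d, (d \in m) = dart e' d && ((d \in A) || (d \in B)).
Local Notation M := (face_of e' del_rot d0).

Let face_merged d : d \in m -> face_of e' del_rot d = M.
Proof. by move=> dm; apply/setP => z; rewrite !inE !(fconnect_cycle cyc_m). Qed.

Let face_kept d : dart e' d -> ~~ ((d \in A) || (d \in B)) ->
  face_of e' del_rot d \in faces e rho :\ A :\ B.
Proof.
rewrite negb_or => dd /andP[dA dB]; rewrite face_of_del_edge // !in_setD1 imset_f; last first.
  by move: dd; rewrite dart_del_edge inE => /andP[].
by rewrite andbT; apply/andP; split; [apply: contraNneq dB | apply: contraNneq dA];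
  move=> <-; rewrite inE connect0.
Qed.

Lemma faces_del_edge : faces e' del_rot = M |: (faces e rho :\ A :\ B).
Proof.
apply/setP => F; rewrite in_setU1; apply/idP/idP.
  case/imsetP => d dd ->; rewrite inE in dd; rewrite -/(face_of _ _ d).
  case dAB : ((d \in A) || (d \in B)); first by rewrite face_merged ?eqxx // mE dd.
  by rewrite face_kept ?dAB ?orbT.
case/orP => [/eqP -> | ].
  by apply: imset_f; move: (d0m); rewrite mE inE => /andP[].
rewrite !in_setD1 => /and3P[FB FA /imsetP[d /[!inE] d_dart FE]].
rewrite -/(face_of e rho d) in FE.
have dA : d \notin A by apply: contraNN FA; rewrite FE => /(face_ofE sym rot) ->.
have dB : d \notin B by apply: contraNN FB; rewrite FE => /(face_ofE sym rot) ->.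
have dd : dart e' d.
  rewrite dart_del_edge d_dart /=; apply/andP; split.
    by apply: contraNneq dA => ->; rewrite inE connect0.
  by apply: contraNneq dB => ->; rewrite inE connect0.
by apply/imsetP; exists d; rewrite ?inE // FE -face_of_del_edge.
Qed.

Lemma card_faces_del_edge : #|faces e rho| = (#|faces e' del_rot|).+1.
Proof.
have M_new : M \notin faces e rho :\ A :\ B.
  rewrite !in_setD1; apply/and3P => -[MB MA /imsetP[d _ Md]].
  rewrite -/(face_of e rho d) in Md.
  have d0M : d0 \in face_of e rho d by rewrite -Md inE connect0.
  move: (d0m); rewrite mE => /andP[_ /orP[d0A | d0B]].
    by move: MA; rewrite Md -(face_ofE sym rot d0M) (face_ofE sym rot d0A) eqxx.
  by move: MB; rewrite Md -(face_ofE sym rot d0M) (face_ofE sym rot d0B) eqxx.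
have A_face : A \in faces e rho by apply: imset_f; rewrite inE.
have B_face : B \in faces e rho by apply: imset_f; rewrite inE /dart /= sym.
rewrite faces_del_edge cardsU1 M_new (cardsD1 A) A_face (cardsD1 B (faces e rho :\ A)).
by rewrite in_setD1 B_face eq_sym AB.
Qed.

End MergedFace.

End DeleteRotation.

Lemma neq_false (E : eqType) (a b : E) : a != b -> ((a == b) = false) * ((b == a) = false).
Proof. by move=> ab; rewrite (negbTE ab) eq_sym (negbTE ab). Qed.

Section TwoQuadrangles.
Variables (T : finType) (e : rel T) (rho : {perm T * T}).
Hypotheses (sym : symmetric e) (irr : irreflexive e) (rot : rotation_system e rho).
Variables (v p q s x y : T).
Hypothesis deg_v : deg e v = 3.
Hypotheses (quad1 : quad_at e rho v p x s) (quad2 : quad_at e rho v q y p).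

Local Notation e' := (del_edge e v p).
Local Notation rho' := (del_rot rho v p).
Local Notation face1 := [:: (v, p); (p, x); (x, s); (s, v)].
Local Notation face2 := [:: (v, q); (q, y); (y, p); (p, v)].
Local Notation merged := [:: (s, v); (v, q); (q, y); (y, p); (p, x); (x, s)].

Let deg_gt2 : 2 < deg e v. Proof. by rewrite deg_v. Qed.
Let edges1 := quad_edges sym rot quad1.
Let edges2 := quad_edges sym rot quad2.
Let e_vp : e v p. Proof. by case: edges1. Qed.
Let e_px : e p x. Proof. by case: edges1. Qed.
Let e_xs : e x s. Proof. by case: edges1. Qed.
Let e_sv : e s v. Proof. by case: edges1. Qed.
Let e_vq : e v q. Proof. by case: edges2. Qed.
Let e_qy : e q y. Proof. by case: edges2. Qed.
Let e_yp : e y p. Proof. by case: edges2. Qed.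

Let edge_neq a b : e a b -> a != b.
Proof. by apply: contraTneq => ->; rewrite irr. Qed.

Let x_v : x != v. Proof. exact: (quad_neq rot deg_gt2 quad1).1. Qed.
Let s_p : s != p. Proof. exact: (quad_neq rot deg_gt2 quad1).2. Qed.
Let y_v : y != v. Proof. exact: (quad_neq rot deg_gt2 quad2).1. Qed.
Let p_q : p != q. Proof. exact: (quad_neq rot deg_gt2 quad2).2. Qed.
Let s_q : s != q.
Proof.
case: quad1 quad2 => _ r1 _ _ _ [_ r2 _ _ _]; apply: contraTneq deg_gt2 => sq.
by rewrite -leqNgt; rewrite sq in r1; apply: (deg_le2_of_2cycle rot e_vp r2 r1).
Qed.

Let neqs := (neq_false x_v, neq_false s_p, neq_false y_v, neq_false p_q, neq_false s_q,
  neq_false (edge_neq e_vp), neq_false (edge_neq e_px), neq_false (edge_neq e_xs),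
  neq_false (edge_neq e_sv), neq_false (edge_neq e_vq), neq_false (edge_neq e_qy),
  neq_false (edge_neq e_yp)).

Lemma nbrs_v w : e v w -> [|| w == s, w == p | w == q].
Proof.
move=> e_vw; apply: contraTT deg_gt2; rewrite !negb_or -leqNgt => /and3P[ws wp wq].
have := @size_uniq_nbrs _ e v [:: w; s; p; q]; rewrite deg_v /= !inE !negb_or.
by rewrite ws wp wq s_p s_q p_q e_vw e_vp e_vq sym e_sv => /(_ isT isT).
Qed.

Let e'_intro a b : e a b -> (a != v) || (b != p) -> (a != p) || (b != v) -> e' a b.
Proof. by move=> ab h1 h2; rewrite del_edgeE ab !xpair_eqE !negb_and h1 h2. Qed.

Let dart_e' a b : e a b -> (a, b) != (v, p) -> (a, b) != (p, v) -> dart e' (a, b).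
Proof. by move=> ab ab1 ab2; rewrite dart_del_edge /dart /= ab ab1 ab2. Qed.

Lemma merged_face_cycle : fcycle (face_step e' rho') merged.
Proof.
have [_ r1 r2 r3 r4] := quad1; have [_ r5 r6 r7 r8] := quad2.
have v_p := edge_neq e_vp.
have rho'_vs : rho' (v, s) = (v, q).
  by rewrite -[(v, s)](permK rho) r1 (del_rot_pred_uw rot v_p).
have rho'_py : rho' (p, y) = (p, x).
  by rewrite -[(p, y)](permK rho) r8 (del_rot_pred_wu rot v_p).
have rho'E a b : (b, a) \notin [:: (v, p); (p, v); (v, s); (p, y)] -> rho' (b, a) = rho (b, a).
  by rewrite -[(v, s)](permK rho) -[(p, y)](permK rho) r1 r8; apply: (del_rotE rot v_p).
rewrite /= !face_stepE ?dart_e' ?xpair_eqE ?neqs ?andbF //=.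
rewrite rho'_vs rho'_py !rho'E ?r2 ?r3 ?r4 ?r6 ?r7 ?eqxx //.
all: by rewrite !inE !xpair_eqE ?neqs ?andbF.
Qed.

Let mem_face1 : face_of e rho (v, p) =i face1.
Proof. exact: mem_quad_face quad1. Qed.

Let mem_face2 : face_of e rho (p, v) =i face2.
Proof.
have ->: face_of e rho (p, v) = face_of e rho (v, q).
  by apply: face_ofE; rewrite // (mem_quad_face sym rot quad2) !inE eqxx !orbT.
exact: mem_quad_face quad2.
Qed.

Lemma mem_merged d : (d \in merged) =
  dart e' d && ((d \in face_of e rho (v, p)) || (d \in face_of e rho (p, v))).
Proof.
rewrite mem_face1 mem_face2.
apply/idP/andP => [dm | [dd dAB]].
  have: all [pred d | dart e' d && ((d \in face1) || (d \in face2))] merged.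
    by rewrite /= !dart_e' ?inE ?xpair_eqE ?neqs ?eqxx ?andbF ?orbT.
  by move/allP/(_ d dm)/andP.
move: dd; rewrite dart_del_edge => /and3P[_].
by case/orP: dAB; rewrite !inE => /or4P[] /eqP ->; rewrite ?eqxx ?orbT.
Qed.

Lemma plane_embedding_del_edge : plane_embedding e rho -> plane_embedding e' rho'.
Proof.
have v_p := edge_neq e_vp.
case=> _ euler; split; first exact: rotation_system_del_edge.
have e'_vs : e' v s by rewrite e'_intro ?neqs ?orbT // sym.
have e'_px : e' p x by rewrite e'_intro ?neqs ?orbT.
have e'_sx : e' s x by rewrite e'_intro ?neqs // sym.
have e'_vp : connect e' v p.
  apply: connect_trans (connect1 e'_vs) (connect_trans (connect1 e'_sx) _).
  by apply: connect1; rewrite del_edge_sym.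
have faces_neq : face_of e rho (v, p) != face_of e rho (p, v).
  apply/negP => /eqP/setP/(_ (v, p)).
  by rewrite mem_face1 mem_face2 !inE !xpair_eqE !neqs !eqxx ?andbF.
have s_v_merged : (s, v) \in merged by rewrite inE eqxx.
move: euler.
rewrite (card_faces_del_edge sym rot e_vp v_p faces_neq merged_face_cycle s_v_merged mem_merged).
rewrite (nedges_del_edge sym e_vp v_p) (niso_del_edge e'_vs e'_px) (ncomp_del_edge sym e'_vp).
by rewrite addnS addSn addnS => -[].
Qed.

Lemma in_F_del_edge : in_F e -> plane_embedding e rho -> in_F e'.
Proof.
case=> _ [_ deg4] pe; split; first by split; [exact: del_edge_sym | exact: del_edge_irr].
split; first by exists rho'; apply: plane_embedding_del_edge.
by move=> w; apply: leq_trans (deg_del_edge e v p w) (deg4 w).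
Qed.

(* Paths of length 2 through [v] between [p] and [s] or [q] are replaced by the
   detours [p x s] and [p y q] along the two quadrangles. *)
Lemma dist_le2_del_edge a b : a != v -> b != v -> a != b ->
  dist_le2 e a b -> dist_le2 e' a b.
Proof.
move=> a_v b_v a_b /orP[e_ab | /existsP[m /andP[e_am e_mb]]].
  by rewrite /dist_le2 e'_intro ?a_v ?b_v ?orbT.
apply/orP; right; apply/existsP.
have [m_v | m_v] := eqVneq m v; last first.
  by exists m; rewrite !e'_intro ?a_v ?b_v ?m_v ?orbT.
rewrite m_v in e_am e_mb; move: (nbrs_v e_mb); rewrite sym in e_am; move: (nbrs_v e_am).
have [a_E _ | a_p] := eqVneq a p.
  case/or3P=> /eqP b_E; rewrite a_E b_E ?eqxx // in a_b *;
    [exists x | exists y]; rewrite !e'_intro ?neqs ?orbT //; by rewrite sym.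
have [b_p | b_p] := eqVneq b p.
  case/or3P=> // /eqP a_E _; rewrite a_E b_p;
    [exists x | exists y]; rewrite !e'_intro ?neqs ?orbT //; by rewrite sym.
by move=> _ _; exists v; rewrite !e'_intro ?a_v ?b_v ?a_p ?b_p ?orbT // sym.
Qed.

(* [x] is already counted among the neighbours of [p]. *)
Lemma card_ball2 : (forall w, deg e w <= 4) ->
  #|[set w | (w != v) && dist_le2 e v w]| <= 11.
Proof.
move=> deg4; pose N a := [set b | e a b].
have ball_sub : [set w | (w != v) && dist_le2 e v w] \subset
    N v :|: (N s :\ v :\ x) :|: (N p :\ v) :|: (N q :\ v).
  apply/subsetP => w; rewrite inE => /andP[w_v /orP[e_vw | /existsP[m /andP[e_vm e_mw]]]].
    by rewrite !inE e_vw.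
  have [-> | w_x] := eqVneq w x; first by rewrite !inE e_px x_v !orbT.
  by case/or3P: (nbrs_v e_vm) => /eqP m_E; rewrite m_E in e_mw; rewrite !inE e_mw w_v ?w_x !orbT.
have cardU (A B : {set T}) : #|A :|: B| <= #|A| + #|B| := (leq_card_setU A B).1.
have N_v : #|N v| = 3 by [].
have N_s : #|N s| = (#|N s :\ v :\ x|).+2.
  by rewrite (cardsD1 v) (cardsD1 x (N s :\ v)) !inE e_sv x_v sym e_xs.
have N_p : #|N p| = (#|N p :\ v|).+1 by rewrite (cardsD1 v) !inE sym e_vp.
have N_q : #|N q| = (#|N q :\ v|).+1 by rewrite (cardsD1 v) !inE sym e_vq.
have le_s : #|N s :\ v :\ x| <= 2 by have := deg4 s; rewrite /deg -/(N s) N_s !ltnS.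
have le_p : #|N p :\ v| <= 3 by have := deg4 p; rewrite /deg -/(N p) N_p ltnS.
have le_q : #|N q :\ v| <= 3 by have := deg4 q; rewrite /deg -/(N q) N_q ltnS.
apply: leq_trans (subset_leq_card ball_sub) _.
apply: leq_trans (cardU _ _) (leq_add (_ : _ <= 8) le_q).
apply: leq_trans (cardU _ _) (leq_add (_ : _ <= 5) le_p).
exact: leq_trans (cardU _ _) (leq_add (eq_leq N_v) le_s).
Qed.

Lemma two_quads_not_minimal : in_F e -> plane_embedding e rho -> 12 < chi2 e ->
  (forall (T' : finType) (e2 : rel T'), in_F e2 -> 12 < chi2 e2 ->
     lexle (#|T|, nedges e) (#|T'|, nedges e2)) -> False.
Proof.
move=> inF pe chi_e minimal; have [_ [_ deg4]] := inF.
have chi_e' : chi2 e' <= 12.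
  rewrite leqNgt; apply/negP => /(minimal _ _ (in_F_del_edge inF pe)).
  by rewrite /lexle /= (nedges_del_edge sym e_vp (edge_neq e_vp)) !ltnn => -[|[]].
have ball_small : #|[set w | (w != v) && dist_le2 e v w]| < 12 by rewrite ltnS card_ball2.
have := d2colorable_leq chi_e' (d2colorable_chi2 e').
move/(d2colorable_extend sym dist_le2_del_edge ball_small)/chi2_min.
by rewrite leqNgt chi_e.
Qed.

End TwoQuadrangles.

Theorem lemma9 (T : finType) (e : rel T) :
  in_F e -> 12 < chi2 e ->
  (forall (T' : finType) (e' : rel T'), in_F e' -> 12 < chi2 e' ->
     lexle (#|T|, nedges e) (#|T'|, nedges e')) ->
  forall rho : {perm T * T}, plane_embedding e rho ->
  ~ exists v : T, deg e v = 3 /\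
      exists f1 f2, f1 \in faces e rho /\ f2 \in faces e rho /\ f1 != f2 /\
                     #|f1| = 4 /\ #|f2| = 4 /\ incident v f1 /\ incident v f2.
Proof.
move=> inF chi_e minimal rho pe [v [deg_v [f1 [f2 [f1F [f2F [f12 [f1_4 [f2_4 [vf1 vf2]]]]]]]]]].
have [[sym irr] _] := inF; have rot := pe.1.
have [p1 [x1 [s1 [quad1 f1E]]]] := quad_of_face4 sym rot f1F f1_4 vf1.
have [p2 [x2 [s2 [quad2 f2E]]]] := quad_of_face4 sym rot f2F f2_4 vf2.
have p12 : p1 != p2 by apply: contra_neq f12 => p12; rewrite f1E f2E p12.
have [s2E | s1E] := adjacent_quads sym rot deg_v quad1 quad2 p12.
  by rewrite s2E in quad2; apply: (two_quads_not_minimal sym irr rot deg_v quad1 quad2).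
by rewrite s1E in quad1; apply: (two_quads_not_minimal sym irr rot deg_v quad2 quad1).
Qed.
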